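(* For every countable ordinal $\beta\ge1$ and every finite $m\ge1$, $\mathsf{rk}(\mathbb Z\cdot\omega^\beta\cdot m)=\omega\cdot(1+\beta)+\lfloor\log_2 m\rfloor$, where $1+\beta$ denotes ordinal addition with $1$ on the left.
   Context: For an ordinal $\alpha$, $\mathbb Z\cdot\alpha$ denotes the linear order consisting of $\alpha$ consecutive copies of $(\mathbb Z,<)$: the lexicographic order on $\alpha\times\mathbb Z$ comparing first the $\alpha$-coordinate. Let $\mathcal F$ be the class of finite linear orders (language $\{<\}$); countable linear orders are the structures considered; substructures are suborders and $\mathsf{age}(X)$ is the set of finite suborders of $X$. For $A\le B$, $B$ is a prime extension of $A$ if $|B\setminus A|=1$; a realization of $B$ in $X$ (where $A\le X$) is $C\le X$ with $A\le C$ and an order-isomorphism $B\to C$ fixing $A$ pointwise. For $F\in\mathsf{age}(X)$ define by recursion: $\mathsf{rk}_X(F)\ge0$ always; $\mathsf{rk}_X(F)\ge\gamma+1$ iff every prime extension $B\in\mathcal F$ of $F$ has a realization $C$ in $X$ with $\mathsf{rk}_X(C)\ge\gamma$; for limit $\gamma$, $\mathsf{rk}_X(F)\ge\gamma$ iff $\mathsf{rk}_X(F)\ge\delta$ for all $\delta<\gamma$. $\mathsf{rk}_X(F)=\sup\{\gamma:\mathsf{rk}_X(F)\ge\gamma\}$ (or $\infty$ if this holds for all ordinals), and $\mathsf{rk}(X)=\mathsf{rk}_X(\emptyset)$. *)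

From Stdlib Require Import List Arith ZArith.
Import ListNotations.

Set Implicit Arguments.

Definition is_strict_linorder {A : Type} (lt : A -> A -> Prop) : Prop :=
  (forall x, ~ lt x x) /\
  (forall x y z, lt x y -> lt y z -> lt x z) /\
  (forall x y, lt x y \/ x = y \/ lt y x).

Definition finite_set {A : Type} (S : A -> Prop) : Prop :=
  exists l : list A, forall x, S x <-> In x l.

Definition finite_type (A : Type) : Prop :=
  exists l : list A, forall x, In x l.

Definition order_embedding {A B : Type} (ltA : A -> A -> Prop)
  (ltB : B -> B -> Prop) (f : A -> B) : Prop :=
  (forall x y, f x = f y -> x = y) /\ (forall x y, ltA x y <-> ltB (f x) (f y)).

Definition sub_lt {A : Type} (ltX : A -> A -> Prop) (F : A -> Prop)
  (x y : {a : A | F a}) : Prop := ltX (proj1_sig x) (proj1_sig y).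

Section Rank.
Variables (A : Type) (ltX : A -> A -> Prop).

(* (B, ltB) together with the embedding j of the suborder F is a prime
   extension of F inside the class of finite linear orders:
   F <= B and |B \ F| = 1 *)
Definition prime_extension (F : A -> Prop) (B : Type) (ltB : B -> B -> Prop)
  (j : {a : A | F a} -> B) : Prop :=
  is_strict_linorder ltB /\ finite_type B /\
  order_embedding (sub_lt ltX F) ltB j /\
  exists b : B, (forall a, j a <> b) /\ (forall y, y = b \/ exists a, j a = y).

(* C <= X is a realization of the prime extension (B, j) of F in X:
   F <= C and h : B -> C is an order isomorphism fixing F pointwise *)
Definition realization (F : A -> Prop) (B : Type) (ltB : B -> B -> Prop)
  (j : {a : A | F a} -> B) (C : A -> Prop) (h : B -> A) : Prop :=
  (forall x, F x -> C x) /\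
  order_embedding ltB ltX h /\
  (forall y, C (h y)) /\ (forall x, C x -> exists y, h y = x) /\
  (forall a, h (j a) = proj1_sig a).

(* ordinals are represented as elements w of a well-order (W, ltW); the
   element w stands for the order type of its initial segment {v | v < w}. *)
Definition immediate_pred {W : Type} (ltW : W -> W -> Prop) (v w : W) : Prop :=
  ltW v w /\ ~ (exists u, ltW v u /\ ltW u w).

Definition is_limit {W : Type} (ltW : W -> W -> Prop) (w : W) : Prop :=
  (exists v, ltW v w) /\ ~ (exists v, immediate_pred ltW v w).

(* rk_ge ltW w F  <->  rk_X(F) >= (order type below w), by the recursion of
   the paper: the zero case is trivial, the successor case asks every prime
   extension to be realized by some C of rank >= predecessor, the limit case
   asks rank >= every smaller ordinal. *)
Inductive rk_ge {W : Type} (ltW : W -> W -> Prop) : W -> (A -> Prop) -> Prop :=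
| rk_ge_intro (w : W) (F : A -> Prop) :
    (forall v, immediate_pred ltW v w ->
       forall (B : Type) (ltB : B -> B -> Prop) (j : {a : A | F a} -> B),
         prime_extension F ltB j ->
         exists (C : A -> Prop) (h : B -> A),
           realization F ltB j C h /\ rk_ge ltW v C) ->
    (is_limit ltW w -> forall v, ltW v w -> rk_ge ltW v F) ->
    rk_ge ltW w F.

(* rk_X(F) equals the ordinal represented by w: rank >= w, and not >= any
   larger ordinal represented in W (W extends beyond w in our use). *)
Definition rank_is {W : Type} (ltW : W -> W -> Prop) (w : W) (F : A -> Prop)
  : Prop :=
  rk_ge ltW w F /\ (forall w', ltW w w' -> ~ rk_ge ltW w' F).

End Rank.

Section Concrete.
Variables (T : Type) (ltT : T -> T -> Prop).
(* (T, ltT) is a well-order representing the countable ordinal beta *)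

(* omega^beta : finitely supported maps beta -> omega, compared at the
   largest point of difference *)
Definition fin_supp (f : T -> nat) : Prop :=
  exists l : list T, forall t, f t <> 0 -> In t l.

Definition oexp : Type := {f : T -> nat | fin_supp f}.

Definition oexp_lt (f g : oexp) : Prop :=
  exists t, proj1_sig f t < proj1_sig g t /\
    (forall s, ltT t s -> proj1_sig f s = proj1_sig g s).

(* Z . omega^beta . m : the lexicographic order on m x omega^beta x Z,
   most significant coordinate first (omega^beta . m = m copies of
   omega^beta; Z . alpha = alpha copies of Z). *)
Definition Zom_car (m : nat) : Type := ({i : nat | i < m} * oexp * Z)%type.

Definition Zom_lt (m : nat) (x y : Zom_car m) : Prop :=
  match x, y with
  | (i, f, z), (i', f', z') =>
      proj1_sig i < proj1_sig i' \/
      (proj1_sig i = proj1_sig i' /\ (oexp_lt f f' \/ (f = f' /\ (z < z')%Z)))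
  end.

(* the well-order omega.(1+beta) + omega: lexicographic order on
   (1+beta) x omega (first coordinate most significant; None is the
   new least element of 1+beta), followed by a copy of omega.
   The element inr k represents the ordinal omega.(1+beta) + k. *)
Definition onePlus_lt (a b : option T) : Prop :=
  match a, b with
  | None, Some _ => True
  | Some s, Some t => ltT s t
  | _, _ => False
  end.

Definition tgt_car : Type := ((option T * nat) + nat)%type.

Definition tgt_lt (x y : tgt_car) : Prop :=
  match x, y with
  | inl (a, n), inl (b, n') => onePlus_lt a b \/ (a = b /\ n < n')
  | inl _, inr _ => True
  | inr _, inl _ => False
  | inr k, inr k' => k < k'
  end.

End Concrete.

From Stdlib Require Import List Arith ZArith Lia Classical ClassicalEpsilon
  FunctionalExtensionality ProofIrrelevance.
Import ListNotations.
Set Implicit Arguments.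
Unset Strict Implicit.

(* Encode (i, f, z) in Z·ω^β·m as the integer vector over the labels
   bot < mid t (t in β) < top holding z, f and i, ordered lexicographically
   from the top label, and add a sentinel point below everything and one
   (m at top) above.  A gap between points P < Q whose largest differing label
   is c has rank ω·c + ⌊log2 (Q c - P c)⌋, where bot, mid t and top stand for
   0, 1+t and 1+β.  If every gap of F (sentinels included) has rank at least w,
   then rk(F) >= w: a gap of rank ω·c + n + 1 is halved at c into two gaps of
   rank at least ω·c + n, and changing coordinates below c cuts out of a gap of
   rank ω·c + n a gap of any rank ω·c' + k with c' < c.  If some empty gap has
   rank below w, then rk(F) < w: any point inserted into it leaves a subgap of
   strictly smaller rank, as log2 (a + b) > min (log2 a) (log2 b).  The empty
   suborder is the single gap of rank ω·(1+β) + ⌊log2 m⌋. *)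

Section LinearOrder.
Variables (A : Type) (lt : A -> A -> Prop).
Hypothesis Hlin : is_strict_linorder lt.

Lemma lin_irrefl x : ~ lt x x.
Proof. exact (proj1 Hlin x). Qed.

Lemma lin_trans x y z : lt x y -> lt y z -> lt x z.
Proof. exact (proj1 (proj2 Hlin) x y z). Qed.

Lemma lin_total x y : lt x y \/ x = y \/ lt y x.
Proof. exact (proj2 (proj2 Hlin) x y). Qed.

Lemma lin_asym x y : lt x y -> ~ lt y x.
Proof. intros H1 H2. exact (lin_irrefl (lin_trans H1 H2)). Qed.

Lemma lin_flip : is_strict_linorder (fun x y => lt y x).
Proof.
  split; [exact lin_irrefl|split].
  - intros x y z H1 H2. exact (lin_trans H2 H1).
  - intros x y. destruct (lin_total x y) as [H|[H|H]]; auto.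
Qed.

Lemma exists_max_in_list (Pr : A -> Prop) (l : list A) :
  (exists u, In u l /\ Pr u) ->
  exists mx, In mx l /\ Pr mx /\ forall u, In u l -> Pr u -> u = mx \/ lt u mx.
Proof.
  induction l as [|a l IH]; intros [u [Hu Pu]]; [destruct Hu|].
  destruct (classic (exists u, In u l /\ Pr u)) as [Hex|Hno].
  - destruct (IH Hex) as [mx [Hm1 [Hm2 Hm3]]].
    destruct (classic (Pr a)) as [Pa|nPa].
    + destruct (lin_total a mx) as [Hlt|[<-|Hlt]].
      * exists mx. split; [right; auto|split; auto].
        intros w [<-|Hw] Pw; auto.
      * exists a. split; [left; auto|split; auto].
        intros w [<-|Hw] Pw; auto.
      * exists a. split; [left; auto|split; auto].
        intros w [<-|Hw] Pw; auto.
        destruct (Hm3 w Hw Pw) as [->|H]; right; eauto using lin_trans.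
    + exists mx. split; [right; auto|split; auto].
      intros w [<-|Hw] Pw; [contradiction|auto].
  - exists a. destruct Hu as [<-|Hu]; [|exfalso; eauto].
    split; [left; auto|split; auto].
    intros w [<-|Hw] Pw; auto. exfalso; eauto.
Qed.

Lemma max_image_below (l : list A) (Hl : forall y, In y l)
  (J : Type) (j : J -> A) (b : A) :
  (forall a, ~ lt (j a) b) \/
  exists a, lt (j a) b /\ forall a', lt (j a') b -> j a' = j a \/ lt (j a') (j a).
Proof.
  destruct (classic (exists a, lt (j a) b)) as [[a Ha]|No]; [right|left; eauto].
  destruct (@exists_max_in_list (fun y => lt y b /\ exists a, j a = y) l)
    as [mx [_ [[Hmx [a' <-]] Hmax]]]; [eauto|].
  exists a'. split; auto. intros a'' Ha''. apply Hmax; eauto.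
Qed.

End LinearOrder.

Section OnePointExtensions.
Variables (A : Type) (ltX : A -> A -> Prop).
Hypothesis HX : is_strict_linorder ltX.
Variable F : A -> Prop.

Lemma finite_set_sig : finite_set F -> finite_type {a | F a}.
Proof.
  intros [l Hl].
  assert (G : forall l, exists ls : list {a | F a},
             forall s, In (proj1_sig s) l -> In s ls).
  { induction l0 as [|x l0 [ls Hls]]; [exists []; intros s []|].
    destruct (classic (F x)) as [Fx|nFx].
    - exists (exist _ x Fx :: ls). intros [y Fy] [E|H]; [|right; auto].
      simpl in E. subst y. left. f_equal. apply proof_irrelevance.
    - exists ls. intros [y Fy] [E|H]; [simpl in E; subst; contradiction|auto]. }
  destruct (G l) as [ls Hls]. exists ls. intros s. apply Hls, Hl, proj2_sig.
Qed.

Lemma realization_finite (B : Type) (ltB : B -> B -> Prop) j C h :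
  finite_type B -> realization ltX F ltB j C h -> finite_set C.
Proof.
  intros [lB HlB] (_ & _ & HC & Hsurj & _). exists (map h lB). intros z. split.
  - intros Cz. destruct (Hsurj z Cz) as [y <-]. apply in_map, HlB.
  - intros Hz. apply in_map_iff in Hz. destruct Hz as [y [<- _]]. apply HC.
Qed.

Lemma realization_of_cut (B : Type) (ltB : B -> B -> Prop) (j : {a | F a} -> B)
  (b : B) (x : A) :
  is_strict_linorder ltB -> order_embedding (sub_lt ltX F) ltB j ->
  (forall a, j a <> b) -> (forall y, y = b \/ exists a, j a = y) ->
  (forall a, ltB (j a) b -> ltX (proj1_sig a) x) ->
  (forall a, ltB b (j a) -> ltX x (proj1_sig a)) ->
  exists h, realization ltX F ltB j (fun z => F z \/ z = x) h.
Proof.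
  intros HB [jinj jiff] Hb Hcov Hbelow Habove.
  assert (Hval : forall y, exists z, (y = b /\ z = x) \/ exists a, j a = y /\ z = proj1_sig a).
  { intros y. destruct (Hcov y) as [->|[a <-]]; eauto. }
  destruct (choice _ Hval) as [h hs].
  assert (hb : h b = x).
  { destruct (hs b) as [[_ E]|[a [E _]]]; [auto|destruct (Hb a E)]. }
  assert (hj : forall a, h (j a) = proj1_sig a).
  { intros a. destruct (hs (j a)) as [[E _]|[a' [E1 E2]]]; [destruct (Hb a E)|].
    apply jinj in E1. subst a'. exact E2. }
  assert (Hcut : forall a, ltB (j a) b <-> ltX (proj1_sig a) x).
  { intros a. split; [auto|intros Hax].
    destruct (lin_total HB (j a) b) as [H|[H|H]]; auto.
    - destruct (Hb a H).
    - destruct (lin_asym HX Hax (Habove a H)). }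
  assert (Hcut' : forall a, ltB b (j a) <-> ltX x (proj1_sig a)).
  { intros a. split; [auto|intros Hxa].
    destruct (lin_total HB (j a) b) as [H|[H|H]]; auto.
    - destruct (lin_asym HX Hxa (Hbelow a H)).
    - destruct (Hb a H). }
  assert (Hiff : forall y y', ltB y y' <-> ltX (h y) (h y')).
  { intros y y'.
    destruct (Hcov y) as [->|[a <-]]; destruct (Hcov y') as [->|[a' <-]];
      rewrite ?hb, ?hj; auto.
    - split; intros H; [destruct (lin_irrefl HB H)|destruct (lin_irrefl HX H)].
    - symmetry. apply jiff. }
  exists h. split; [|split; [split|split; [|split]]]; auto.
  - intros y y' E. destruct (lin_total HB y y') as [H|[H|H]]; auto;
      apply Hiff in H; rewrite E in H; destruct (lin_irrefl HX H).
  - intros y. destruct (Hcov y) as [->|[a <-]]; [rewrite hb|rewrite hj; left; apply proj2_sig].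
    right; auto.
  - intros z [Fz| ->]; [exists (j (exist _ z Fz)); apply hj|eauto].
Qed.

Definition cut_lt (lo : A -> Prop) (y y' : option {a | F a}) : Prop :=
  match y, y' with
  | Some a, Some a' => ltX (proj1_sig a) (proj1_sig a')
  | Some a, None => lo (proj1_sig a)
  | None, Some a' => ~ lo (proj1_sig a')
  | None, None => False
  end.

Lemma cut_extension (lo : A -> Prop) :
  finite_set F -> (forall a a', ltX a a' -> lo a' -> lo a) ->
  prime_extension ltX F (cut_lt lo) Some.
Proof.
  intros Hfin Hdown. destruct (finite_set_sig Hfin) as [ls Hls].
  split; [split; [|split]|split; [|split]].
  - intros [a|]; simpl; [apply (lin_irrefl HX)|auto].
  - intros [a|] [a'|] [a''|]; simpl; intros H1 H2; try contradiction.
    + exact (lin_trans HX H1 H2).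
    + exact (Hdown _ _ H1 H2).
    + destruct (lin_total HX (proj1_sig a) (proj1_sig a'')) as [H|[H|H]]; auto.
      * destruct a, a''; simpl in H; subst. contradiction.
      * destruct (H2 (Hdown _ _ H H1)).
    + intros Hlo. exact (H1 (Hdown _ _ H2 Hlo)).
  - intros [a|] [a'|]; simpl; auto.
    + destruct (lin_total HX (proj1_sig a) (proj1_sig a')) as [H|[H|H]]; auto.
      right; left. destruct a, a'; simpl in H; subst. f_equal. f_equal.
      apply proof_irrelevance.
    + destruct (classic (lo (proj1_sig a))); auto.
    + destruct (classic (lo (proj1_sig a'))); auto.
  - exists (None :: map Some ls). intros [a|]; [right; apply in_map|left]; auto.
  - split; [intros x y E; injection E; auto|intros x y; simpl; tauto].
  - exists None. split; [intros a; discriminate|].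
    intros [a|]; [right; eauto|left; auto].
Qed.

Lemma cut_realization (lo : A -> Prop) C h :
  realization ltX F (cut_lt lo) Some C h ->
  (forall a, F a -> lo a -> ltX a (h None)) /\
  (forall a, F a -> ~ lo a -> ltX (h None) a) /\
  (forall z, C z -> z = h None \/ F z).
Proof.
  intros (_ & [_ hiff] & _ & Hsurj & Hfix).
  split; [|split].
  - intros a Fa Hlo. pose proof (Hfix (exist _ a Fa)) as E. simpl in E.
    rewrite <- E. apply hiff. exact Hlo.
  - intros a Fa Hlo. pose proof (Hfix (exist _ a Fa)) as E. simpl in E.
    rewrite <- E. apply hiff. exact Hlo.
  - intros z Cz. destruct (Hsurj z Cz) as [[a|] <-]; auto.
    right. rewrite Hfix. apply proj2_sig.
Qed.

End OnePointExtensions.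

Section Rank.
Variables (T : Type) (ltT : T -> T -> Prop).
Hypothesis Hlin : is_strict_linorder ltT.

Definition label : Type := (option T + unit)%type.
Definition bot : label := inl None.
Definition mid (t : T) : label := inl (Some t).
Definition top : label := inr tt.

Definition label_lt (c d : label) : Prop :=
  match c, d with
  | inl a, inl b => onePlus_lt ltT a b
  | inl _, inr _ => True
  | inr _, _ => False
  end.

Definition label_le (c d : label) : Prop := c = d \/ label_lt c d.

Definition at_label (c : label) (n : nat) : tgt_car T :=
  match c with inl a => inl (a, n) | inr _ => inr n end.

Lemma label_lin : is_strict_linorder label_lt.
Proof.
  split; [|split].
  - intros [[a|]|[]]; simpl; auto. apply (lin_irrefl Hlin).
  - intros [[a|]|[]] [[b|]|[]] [[x|]|[]]; simpl; try tauto. apply (lin_trans Hlin).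
  - intros [[a|]|[]] [[b|]|[]]; simpl; auto.
    destruct (lin_total Hlin a b) as [H|[<-|H]]; auto.
Qed.

Lemma top_maximal c : ~ label_lt top c.
Proof. destruct c as [a|[]]; simpl; auto. Qed.

Lemma at_label_lt c n c' n' :
  tgt_lt ltT (at_label c n) (at_label c' n') <-> label_lt c c' \/ (c = c' /\ n < n').
Proof.
  destruct c as [a|[]], c' as [b|[]]; simpl; split; intros H; try tauto.
  - destruct H as [H|[-> H]]; auto.
  - destruct H as [H|[E H]]; auto. injection E as ->. auto.
  - destruct H as [[]|[E _]]. discriminate.
Qed.

Lemma at_label_surj x : exists c n, x = at_label c n.
Proof. destruct x as [[a n]|n]; [exists (inl a), n|exists top, n]; reflexivity. Qed.

Lemma tgt_lin : is_strict_linorder (tgt_lt ltT).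
Proof.
  split; [|split].
  - intros x. destruct (at_label_surj x) as [c [n ->]]. rewrite at_label_lt.
    intros [H|[_ H]]; [exact (lin_irrefl label_lin H)|lia].
  - intros x y z. destruct (at_label_surj x) as [c [n ->]].
    destruct (at_label_surj y) as [c' [n' ->]], (at_label_surj z) as [c'' [n'' ->]].
    rewrite !at_label_lt. intros [H|[-> H]] [H'|[-> H']]; auto.
    + left. exact (lin_trans label_lin H H').
    + right. split; [auto|lia].
  - intros x y. destruct (at_label_surj x) as [c [n ->]].
    destruct (at_label_surj y) as [c' [n' ->]]. rewrite !at_label_lt.
    destruct (lin_total label_lin c c') as [H|[<-|H]]; auto.
    destruct (lt_eq_lt_dec n n') as [[H|<-]|H]; auto.
Qed.

Definition tgt_le (x y : tgt_car T) : Prop := tgt_lt ltT x y \/ x = y.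

Lemma tgt_le_trans x y z : tgt_le x y -> tgt_le y z -> tgt_le x z.
Proof.
  intros [H| ->] [H'| ->]; unfold tgt_le; auto. left. exact (lin_trans tgt_lin H H').
Qed.

Lemma tgt_lt_le_trans x y z : tgt_lt ltT x y -> tgt_le y z -> tgt_lt ltT x z.
Proof. intros H [H'| ->]; [exact (lin_trans tgt_lin H H')|auto]. Qed.

Lemma tgt_not_lt x y : ~ tgt_lt ltT y x -> tgt_le x y.
Proof. intros H. destruct (lin_total tgt_lin x y) as [E|[E|E]]; [left|right|]; tauto. Qed.

Lemma at_label_le c n n' : n <= n' -> tgt_le (at_label c n) (at_label c n').
Proof.
  intros H. destruct (Nat.eq_dec n n') as [->|N]; [right; auto|].
  left. apply at_label_lt. right. split; [auto|lia].
Qed.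

Lemma at_label_lt_label c c' n n' :
  label_lt c c' -> tgt_lt ltT (at_label c n) (at_label c' n').
Proof. intros. apply at_label_lt; auto. Qed.

Lemma lt_at_label_S v c n : tgt_lt ltT v (at_label c (S n)) -> tgt_le v (at_label c n).
Proof.
  intros H. destruct (at_label_surj v) as [c' [n' ->]].
  apply at_label_lt in H. destruct H as [H|[-> H]].
  - left. apply at_label_lt. auto.
  - apply at_label_le. lia.
Qed.

Lemma lt_at_label_0 v c :
  tgt_lt ltT v (at_label c 0) -> exists c' n, v = at_label c' n /\ label_lt c' c.
Proof.
  intros H. destruct (at_label_surj v) as [c' [n ->]].
  apply at_label_lt in H. destruct H as [H|[-> H]]; [eauto|lia].
Qed.

Hypothesis Hwf : well_founded ltT.

Lemma onePlus_wf : well_founded (onePlus_lt ltT).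
Proof.
  assert (A0 : Acc (onePlus_lt ltT) None) by (constructor; intros [y|] []).
  intros [t|]; auto.
  induction (Hwf t) as [t _ IH].
  constructor. intros [y|] H; simpl in H; auto.
Qed.

Lemma tgt_wf : well_founded (tgt_lt ltT).
Proof.
  assert (Hl : forall a n, Acc (tgt_lt ltT) (inl (a, n))).
  { intros a. induction (onePlus_wf a) as [a _ IHa].
    intros n. induction (lt_wf n) as [n _ IHn].
    constructor. intros [[b k]|k] H; simpl in H; [|destruct H].
    destruct H as [H|[-> H]]; auto. }
  intros [[a n]|n]; auto.
  induction (lt_wf n) as [n _ IHn].
  constructor. intros [[b k]|k] H; simpl in H; auto.
Qed.


Definition point : Type := label -> Z.

Definition agree_above (c : label) (P Q : point) : Prop :=
  forall d, label_lt c d -> P d = Q d.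

Definition top_diff (P Q : point) (c : label) : Prop :=
  (P c < Q c)%Z /\ agree_above c P Q.

Definition point_lt (P Q : point) : Prop := exists c, top_diff P Q c.

Definition point_le (P Q : point) : Prop := P = Q \/ point_lt P Q.

Definition gap_rank (P Q : point) (c : label) : tgt_car T :=
  at_label c (Nat.log2 (Z.to_nat (Q c - P c))).

Lemma top_diff_uniq P Q c1 c2 : top_diff P Q c1 -> top_diff P Q c2 -> c1 = c2.
Proof.
  intros [A1 B1] [A2 B2].
  destruct (lin_total label_lin c1 c2) as [H|[H|H]]; auto.
  - rewrite (B1 _ H) in A2. lia.
  - rewrite (B2 _ H) in A1. lia.
Qed.

Lemma point_lt_irrefl P : ~ point_lt P P.
Proof. intros [c [H _]]. lia. Qed.

Lemma top_diff_trans P Q R c1 c2 : top_diff P R c1 -> top_diff R Q c2 ->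
  exists c, top_diff P Q c /\ label_le c1 c /\ label_le c2 c.
Proof.
  intros [A1 B1] [A2 B2]. unfold label_le.
  destruct (lin_total label_lin c1 c2) as [H|[<-|H]].
  - exists c2. split; auto. split; [rewrite B1; auto|].
    intros d Hd. rewrite B1, B2; auto. exact (lin_trans label_lin H Hd).
  - exists c1. split; auto. split; [lia|]. intros d Hd. rewrite B1, B2; auto.
  - exists c1. split; auto. split; [rewrite <- B2; auto|].
    intros d Hd. rewrite B1, B2; auto. exact (lin_trans label_lin H Hd).
Qed.

Lemma point_lt_trans P Q R : point_lt P R -> point_lt R Q -> point_lt P Q.
Proof.
  intros [c1 H1] [c2 H2]. destruct (top_diff_trans H1 H2) as [c [H _]]. exists c; auto.
Qed.

Lemma point_le_lt_trans P Q R : point_le P R -> point_lt R Q -> point_lt P Q.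
Proof. intros [->|H] H'; [auto|exact (point_lt_trans H H')]. Qed.

Lemma point_lt_le_trans P Q R : point_lt P R -> point_le R Q -> point_lt P Q.
Proof. intros H [<-|H']; [auto|exact (point_lt_trans H H')]. Qed.

Lemma top_diff_between P Q R c c1 c2 :
  top_diff P Q c -> top_diff P R c1 -> top_diff R Q c2 -> label_le c1 c /\ label_le c2 c.
Proof.
  intros H H1 H2. destruct (top_diff_trans H1 H2) as [e [He [L1 L2]]].
  rewrite (top_diff_uniq H He). auto.
Qed.

Lemma log2_add_split a b : 1 <= a -> 1 <= b ->
  Nat.log2 a < Nat.log2 (a + b) \/ Nat.log2 b < Nat.log2 (a + b).
Proof.
  intros Ha Hb.
  assert (K : forall x y, 1 <= x -> x <= y -> Nat.log2 x < Nat.log2 (x + y)).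
  { intros x y Hx Hxy.
    assert (Nat.log2 (2 * x) <= Nat.log2 (x + y)) by (apply Nat.log2_le_mono; lia).
    rewrite Nat.log2_double in H by lia. lia. }
  destruct (Nat.le_ge_cases a b) as [H|H]; [left; apply K; lia|].
  right. rewrite Nat.add_comm. apply K; lia.
Qed.

Lemma gap_rank_split P Q R c c1 c2 :
  top_diff P Q c -> top_diff P R c1 -> top_diff R Q c2 ->
  tgt_lt ltT (gap_rank P R c1) (gap_rank P Q c) \/
  tgt_lt ltT (gap_rank R Q c2) (gap_rank P Q c).
Proof.
  intros H H1 H2. destruct (top_diff_between H H1 H2) as [E1 E2]. unfold gap_rank.
  destruct E1 as [->|E1]; [|left; apply at_label_lt_label; auto].
  destruct E2 as [->|E2]; [|right; apply at_label_lt_label; auto].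
  destruct H1 as [A1 _], H2 as [A2 _].
  replace (Z.to_nat (Q c - P c)) with (Z.to_nat (R c - P c) + Z.to_nat (Q c - R c)) by lia.
  destruct (@log2_add_split (Z.to_nat (R c - P c)) (Z.to_nat (Q c - R c)))
    as [L|L]; try lia; [left|right]; apply at_label_lt; auto.
Qed.

Lemma top_diff_inner_left P P' Q' c' :
  top_diff P' Q' c' -> point_le P' P -> point_lt P Q' ->
  agree_above c' P P' /\ (P' c' <= P c')%Z.
Proof.
  intros H [<-|[c3 H3]] [c4 H4]; [split; [intros d _; auto|lia]|].
  destruct (top_diff_between H H3 H4) as [[->|E3] _].
  - split; [intros d Hd; symmetry; apply H3; auto|destruct H3; lia].
  - split; [intros d Hd; symmetry; apply H3; exact (lin_trans label_lin E3 Hd)|].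
    rewrite (proj2 H3 _ E3). lia.
Qed.

Lemma top_diff_inner_right Q P' Q' c' :
  top_diff P' Q' c' -> point_le Q Q' -> point_lt P' Q ->
  agree_above c' Q Q' /\ (Q c' <= Q' c')%Z.
Proof.
  intros H [<-|[c3 H3]] [c4 H4]; [split; [intros d _; auto|lia]|].
  destruct (top_diff_between H H4 H3) as [_ [->|E3]].
  - split; [intros d Hd; apply H3; auto|destruct H3; lia].
  - split; [intros d Hd; apply H3; exact (lin_trans label_lin E3 Hd)|].
    rewrite (proj2 H3 _ E3). lia.
Qed.

Lemma gap_rank_mono P P' Q Q' c c' : point_le P' P -> point_le Q Q' ->
  top_diff P Q c -> top_diff P' Q' c' -> tgt_le (gap_rank P Q c) (gap_rank P' Q' c').
Proof.
  intros HP HQ H H'.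
  assert (PQ : point_lt P Q) by (exists c; auto).
  destruct (top_diff_inner_left H' HP (point_lt_le_trans PQ HQ)) as [A1 A2].
  destruct (top_diff_inner_right H' HQ (point_le_lt_trans HP PQ)) as [B1 B2].
  unfold gap_rank.
  destruct (lin_total label_lin c c') as [L|[<-|L]].
  - left. apply at_label_lt_label; auto.
  - apply at_label_le, Nat.log2_le_mono. destruct H; lia.
  - exfalso. destruct H as [X _]. rewrite A1, B1, (proj2 H' c L) in X; auto. lia.
Qed.

Lemma point_trichotomy (P Q : point) (l : list label) :
  (forall c, P c <> Q c -> In c l) -> P = Q \/ point_lt P Q \/ point_lt Q P.
Proof.
  intros Hl.
  destruct (classic (exists c, P c <> Q c)) as [[c Hc]|Hno].
  2:{ left. apply functional_extensionality. intros c.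
      destruct (Z.eq_dec (P c) (Q c)); auto. exfalso; eauto. }
  destruct (@exists_max_in_list _ _ label_lin (fun c => P c <> Q c) l)
    as [mx [_ [Hm1 Hm2]]]; [eauto|].
  assert (Ab : agree_above mx P Q).
  { intros d Hd. destruct (Z.eq_dec (P d) (Q d)) as [E|N]; auto.
    destruct (Hm2 d (Hl d N) N) as [->|X].
    - destruct (lin_irrefl label_lin Hd).
    - destruct (lin_asym label_lin Hd X). }
  right. destruct (Z_lt_le_dec (P mx) (Q mx)); [left|right]; exists mx.
  - split; auto.
  - split; [lia|]. intros d Hd. symmetry; auto.
Qed.

Variables (m : nat) (t0 : T).
Hypothesis Hm : 1 <= m.
Hypothesis Ht0 : forall t, ~ ltT t t0.

Local Notation ZL := (@Zom_lt T ltT m).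

Definition point_of (x : Zom_car T m) : point := fun c =>
  match c with
  | inr _ => Z.of_nat (proj1_sig (fst (fst x)))
  | inl None => snd x
  | inl (Some t) => Z.of_nat (proj1_sig (snd (fst x)) t)
  end.

Definition is_real (r : point) : Prop :=
  (0 <= r top < Z.of_nat m)%Z /\ (forall t, (0 <= r (mid t))%Z) /\
  exists l, forall t, r (mid t) <> 0%Z -> In t l.

(* [mid t0] is the least label at which real points are nonnegative, so
   [left_end] lies below all of them. *)
Definition left_end : point := fun c =>
  match c with
  | inl (Some t) => if excluded_middle_informative (t = t0) then (-1)%Z else 0%Z
  | _ => 0%Z
  end.

Definition right_end : point := fun c =>
  match c with inr _ => Z.of_nat m | _ => 0%Z end.

Definition lower_end (P : point) : Prop := P = left_end \/ is_real P.
Definition upper_end (Q : point) : Prop := Q = right_end \/ is_real Q.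

Lemma is_real_point_of x : is_real (point_of x).
Proof.
  destruct x as [[[i Hi] [f [l Hl]]] z]. unfold is_real; simpl.
  split; [lia|split; [intros; lia|]].
  exists l. intros t Ht. apply Hl. lia.
Qed.

Lemma oexp_ext (f g : oexp T) : (forall t, proj1_sig f t = proj1_sig g t) -> f = g.
Proof.
  destruct f as [f Hf], g as [g Hg]. simpl. intros E.
  assert (f = g) by (apply functional_extensionality; auto). subst g.
  f_equal. apply proof_irrelevance.
Qed.

Lemma point_of_surj r : is_real r -> exists x, point_of x = r.
Proof.
  intros [[A1 A2] [A3 [l A4]]].
  assert (Hi : Z.to_nat (r top) < m) by lia.
  assert (Hf : fin_supp (fun t => Z.to_nat (r (mid t)))).
  { exists l. intros t Ht. apply A4. specialize (A3 t). lia. }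
  exists (exist _ (Z.to_nat (r top)) Hi, exist _ _ Hf, r bot).
  apply functional_extensionality. intros [[t|]|[]]; simpl.
  - specialize (A3 t). unfold mid in *. lia.
  - reflexivity.
  - unfold top in *. lia.
Qed.

Lemma point_of_inj x y : point_of x = point_of y -> x = y.
Proof.
  destruct x as [[[i Hi] f] z], y as [[[i' Hi'] f'] z']. intros E.
  pose proof (f_equal (fun P => P top) E) as ET. simpl in ET.
  pose proof (f_equal (fun P => P bot) E) as EB. simpl in EB.
  assert (i = i') by lia. subst i' z'.
  rewrite (proof_irrelevance _ Hi Hi').
  f_equal. f_equal. apply oexp_ext. intros t.
  pose proof (f_equal (fun P => P (mid t)) E) as EM. simpl in EM. lia.
Qed.

Lemma Zom_lt_point_lt x y : ZL x y <-> point_lt (point_of x) (point_of y).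
Proof.
  destruct x as [[[i Hi] f] z], y as [[[i' Hi'] f'] z']. simpl. split.
  - intros [H|[E [[t [H1 H2]]|[E2 H]]]].
    + exists top. split; [simpl; lia|intros d Hd; destruct (top_maximal Hd)].
    + exists (mid t). split; [simpl; lia|].
      intros [[s|]|[]] Hd; simpl in *; try lia; try tauto. rewrite H2; auto.
    + subst f'. exists bot. split; [simpl; lia|].
      intros [[s|]|[]] Hd; simpl in *; try lia; try tauto.
  - intros [[[t|]|[]] [H1 H2]]; simpl in H1.
    + right. split; [specialize (H2 top I); simpl in H2; lia|].
      left. exists t. split; [lia|].
      intros s Hs. specialize (H2 (mid s) Hs). simpl in H2. lia.
    + right. split; [specialize (H2 top I); simpl in H2; lia|].
      right. split; [|auto]. apply oexp_ext. intros t.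
      specialize (H2 (mid t) I). simpl in H2. lia.
    + left. lia.
Qed.

Lemma Zom_lin : is_strict_linorder ZL.
Proof.
  split; [|split].
  - intros x H. apply Zom_lt_point_lt in H. exact (point_lt_irrefl H).
  - intros x y z H1 H2. apply Zom_lt_point_lt.
    apply Zom_lt_point_lt in H1, H2. exact (point_lt_trans H1 H2).
  - intros x y.
    destruct (is_real_point_of x) as [_ [_ [l1 L1]]].
    destruct (is_real_point_of y) as [_ [_ [l2 L2]]].
    destruct (@point_trichotomy (point_of x) (point_of y) ([top; bot] ++ map mid (l1 ++ l2)))
      as [E|[E|E]].
    + intros [[t|]|[]] N; [right; right|right; left|left]; auto.
      apply (in_map mid), in_or_app.
      destruct (Z.eq_dec (point_of x (mid t)) 0); [right; apply L2|left; apply L1];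
        unfold mid in *; lia.
    + right; left. apply point_of_inj; auto.
    + left. apply Zom_lt_point_lt; auto.
    + right; right. apply Zom_lt_point_lt; auto.
Qed.

Lemma left_end_t0 : left_end (mid t0) = (-1)%Z.
Proof. simpl. destruct (excluded_middle_informative (t0 = t0)); congruence. Qed.

Lemma left_end_ne_t0 t : t <> t0 -> left_end (mid t) = 0%Z.
Proof. intros H. simpl. destruct (excluded_middle_informative (t = t0)); congruence. Qed.

Lemma below_mid_t0 c : label_lt c (mid t0) -> c = bot.
Proof. destruct c as [[s|]|u]; simpl; intros H; [destruct (Ht0 H)|auto|destruct H]. Qed.

Lemma left_end_lt_real r : is_real r -> point_lt left_end r.
Proof.
  intros [A1 [A2 [l A3]]].
  destruct (@point_trichotomy left_end r ([top; bot; mid t0] ++ map mid l))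
    as [E|[E|E]]; auto.
  - intros [[t|]|[]] N; [|right; left; auto|left; auto].
    destruct (excluded_middle_informative (t = t0)) as [->|Nt]; [right; right; left; auto|].
    right; right; right. apply (in_map mid), A3. rewrite <- (left_end_ne_t0 Nt). auto.
  - exfalso. pose proof (f_equal (fun P => P (mid t0)) E) as E0. cbv beta in E0.
    rewrite left_end_t0 in E0. specialize (A2 t0). lia.
  - exfalso. destruct E as [[[t|]|[]] [H1 H2]]; simpl in H1.
    + specialize (A2 t). destruct (excluded_middle_informative (t = t0)); unfold mid in *; lia.
    + specialize (H2 (mid t0) I). rewrite left_end_t0 in H2. specialize (A2 t0).
      unfold mid in *. lia.
    + unfold top in *. lia.
Qed.

Lemma top_diff_real_right_end r : is_real r -> top_diff r right_end top.
Proof.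
  intros [[_ A] _]. split; [exact A|intros d Hd; destruct (top_maximal Hd)].
Qed.

Lemma top_diff_ends : top_diff left_end right_end top.
Proof. split; [simpl; lia|intros d Hd; destruct (top_maximal Hd)]. Qed.

Lemma gap_rank_ends : gap_rank left_end right_end top = inr (Nat.log2 m).
Proof. unfold gap_rank. simpl. rewrite Z.sub_0_r, Nat2Z.id. reflexivity. Qed.

Lemma lower_end_top P : lower_end P -> (0 <= P top < Z.of_nat m)%Z.
Proof. intros [->|[A _]]; [simpl; lia|exact A]. Qed.

Lemma lower_end_mid P t : lower_end P -> (-1 <= P (mid t))%Z.
Proof.
  intros [->|[_ [A _]]]; [|specialize (A t); lia].
  simpl. destruct (excluded_middle_informative (t = t0)); lia.
Qed.

Lemma lower_end_support P : lower_end P -> exists l, forall t, P (mid t) <> 0%Z -> In t l.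
Proof.
  intros [->|[_ [_ A]]]; [|exact A]. exists [t0]. intros t H.
  destruct (excluded_middle_informative (t = t0)) as [->|N]; [left; auto|].
  rewrite left_end_ne_t0 in H; [destruct (H eq_refl)|auto].
Qed.

Lemma upper_end_top Q : upper_end Q -> (Q top <= Z.of_nat m)%Z.
Proof. intros [->|[A _]]; simpl; lia. Qed.

Lemma upper_end_mid Q t : upper_end Q -> (0 <= Q (mid t))%Z.
Proof. intros [->|[_ [A _]]]; [simpl; lia|auto]. Qed.

Lemma left_end_not_real : ~ is_real left_end.
Proof. intros [_ [A _]]. specialize (A t0). rewrite left_end_t0 in A. lia. Qed.

Lemma top_diff_left_end Q c : upper_end Q -> top_diff left_end Q c -> c <> bot.
Proof.
  intros HQ [_ B] ->. specialize (B (mid t0) I). rewrite left_end_t0 in B.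
  pose proof (upper_end_mid (t:=t0) HQ). lia.
Qed.

Definition graft (P : point) (c : label) (a : Z) : point := fun d =>
  if excluded_middle_informative (label_lt c d) then P d
  else if excluded_middle_informative (d = c) then a else 0%Z.

Lemma graft_above P c a d : label_lt c d -> graft P c a d = P d.
Proof. intros. unfold graft. destruct (excluded_middle_informative (label_lt c d)); tauto. Qed.

Lemma graft_at P c a : graft P c a c = a.
Proof.
  unfold graft. destruct (excluded_middle_informative (label_lt c c)) as [X|_].
  - destruct (lin_irrefl label_lin X).
  - destruct (excluded_middle_informative (c = c)); congruence.
Qed.

Lemma graft_real P c a : lower_end P -> is_real P \/ c <> bot ->
  (c = top -> (0 <= a < Z.of_nat m)%Z) -> (forall t, c = mid t -> (0 <= a)%Z) ->
  is_real (graft P c a).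
Proof.
  intros HP Hc Htop Hmid. destruct (lower_end_support HP) as [l Hl].
  split; [|split].
  - destruct (excluded_middle_informative (c = top)) as [->|N]; [rewrite graft_at; auto|].
    rewrite graft_above; [apply lower_end_top; auto|].
    destruct c as [x|[]]; simpl; auto.
  - intros t. unfold graft.
    destruct (excluded_middle_informative (label_lt c (mid t))) as [Ht|_].
    + destruct HP as [->|[_ [A _]]]; auto.
      destruct (excluded_middle_informative (t = t0)) as [->|N].
      * apply below_mid_t0 in Ht.
        destruct Hc as [Hc|Hc]; [destruct (left_end_not_real Hc)|congruence].
      * rewrite left_end_ne_t0; [lia|auto].
    + destruct (excluded_middle_informative (mid t = c)); [eauto|lia].
  - exists (match c with inl (Some s) => s :: l | _ => l end).
    intros t Ht. unfold graft in Ht.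
    destruct (excluded_middle_informative (label_lt c (mid t))).
    + apply Hl in Ht. destruct c as [[s|]|u]; simpl; auto.
    + destruct (excluded_middle_informative (mid t = c)) as [<-|]; [left; auto|lia].
Qed.

Lemma top_diff_graft_left P c a : (P c < a)%Z -> top_diff P (graft P c a) c.
Proof. intros H. split; [rewrite graft_at; auto|intros d Hd; rewrite graft_above; auto]. Qed.

Lemma top_diff_graft_right Q a : (a < Q bot)%Z -> top_diff (graft Q bot a) Q bot.
Proof. intros H. split; [rewrite graft_at; auto|intros d Hd; rewrite graft_above; auto]. Qed.

Lemma top_diff_graft_below P Q c c' a :
  top_diff P Q c -> label_lt c' c -> top_diff (graft P c' a) Q c.
Proof.
  intros [A B] Hc. split; [rewrite graft_above; auto|].
  intros d Hd. rewrite graft_above; [auto|exact (lin_trans label_lin Hc Hd)].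
Qed.

Lemma top_diff_graft_bot P Q c a :
  top_diff P Q c -> label_lt bot c -> top_diff P (graft Q bot a) c.
Proof.
  intros [A B] Hc. split; [rewrite graft_above; auto|].
  intros d Hd. rewrite graft_above; [auto|exact (lin_trans label_lin Hc Hd)].
Qed.

Lemma pow2_pos j : 1 <= 2 ^ j.
Proof. induction j; simpl; lia. Qed.

Lemma gap_rank_pow2 P Q c j :
  (Q c - P c = Z.of_nat (2 ^ j))%Z -> gap_rank P Q c = at_label c j.
Proof.
  intros H. unfold gap_rank. rewrite H, Nat2Z.id, Nat.log2_pow2; [auto|lia].
Qed.

Definition good_split (v : tgt_car T) (P Q r : point) : Prop :=
  is_real r /\ exists c1 c2, top_diff P r c1 /\ top_diff r Q c2 /\
    tgt_le v (gap_rank P r c1) /\ tgt_le v (gap_rank r Q c2).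

Lemma good_split_weaken v w P Q r : tgt_le v w -> good_split w P Q r -> good_split v P Q r.
Proof.
  intros Hvw [Hr [c1 [c2 (T1 & T2 & V1 & V2)]]].
  split; [auto|exists c1, c2; split; [|split; [|split]]]; eauto using tgt_le_trans.
Qed.

Lemma split_halve P Q c j : lower_end P -> upper_end Q -> top_diff P Q c ->
  Nat.log2 (Z.to_nat (Q c - P c)) = S j ->
  good_split (at_label c j) P Q (graft P c (P c + Z.of_nat (2 ^ j))).
Proof.
  intros HP HQ H Hlog. pose proof H as [A B]. set (p := 2 ^ j).
  assert (Hp : 2 * p <= Z.to_nat (Q c - P c)).
  { destruct (Nat.log2_spec (Z.to_nat (Q c - P c))) as [S1 _]; [lia|].
    rewrite Hlog, Nat.pow_succ_r' in S1. unfold p. lia. }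
  assert (Hp1 : 1 <= p) by apply pow2_pos.
  split; [apply graft_real; auto|exists c, c; split; [|split; [|split]]].
  - destruct HP as [->|HP]; [right; exact (top_diff_left_end HQ H)|left; exact HP].
  - intros ->. pose proof (lower_end_top HP). pose proof (upper_end_top HQ). lia.
  - intros t ->. pose proof (lower_end_mid (t:=t) HP). lia.
  - apply top_diff_graft_left. lia.
  - split; [rewrite graft_at; lia|intros d Hd; rewrite graft_above; auto].
  - right. symmetry. apply gap_rank_pow2. rewrite graft_at. lia.
  - unfold gap_rank. rewrite graft_at. apply at_label_le.
    rewrite <- (Nat.log2_pow2 j) at 1 by lia. apply Nat.log2_le_mono. unfold p in *. lia.
Qed.

Lemma split_below P Q c c' n : lower_end P -> top_diff P Q c -> label_lt c' c ->
  is_real P \/ c' <> bot -> exists r, good_split (at_label c' n) P Q r.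
Proof.
  intros HP H Hc' Hreal. pose proof (pow2_pos n).
  exists (graft P c' (P c' + Z.of_nat (2 ^ n))).
  split; [apply graft_real; auto|exists c', c; split; [|split; [|split]]].
  - intros ->. destruct (top_maximal Hc').
  - intros t ->. pose proof (lower_end_mid (t:=t) HP). lia.
  - apply top_diff_graft_left. lia.
  - exact (top_diff_graft_below _ H Hc').
  - right. symmetry. apply gap_rank_pow2. rewrite graft_at. lia.
  - left. unfold gap_rank. rewrite graft_above by auto. apply at_label_lt_label; auto.
Qed.

Lemma split_bot_right P Q c n : is_real Q -> top_diff P Q c -> label_lt bot c ->
  exists r, good_split (at_label bot n) P Q r.
Proof.
  intros HQ H Hc. pose proof (pow2_pos n).
  exists (graft Q bot (Q bot - Z.of_nat (2 ^ n))).
  split; [apply graft_real; try discriminate; auto; right; auto|].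
  exists c, bot. split; [|split; [|split]].
  - exact (top_diff_graft_bot _ H Hc).
  - apply top_diff_graft_right. lia.
  - left. unfold gap_rank. rewrite graft_above by auto. apply at_label_lt_label; auto.
  - right. symmetry. apply gap_rank_pow2. rewrite graft_at. lia.
Qed.

Lemma gap_split P Q c v : lower_end P -> upper_end Q -> top_diff P Q c ->
  tgt_lt ltT v (gap_rank P Q c) -> exists r, good_split v P Q r.
Proof.
  intros HP HQ H Hv. unfold gap_rank in Hv.
  destruct (Nat.log2 (Z.to_nat (Q c - P c))) as [|j] eqn:Hlog.
  - destruct (lt_at_label_0 Hv) as [c' [n [-> Hc']]].
    destruct (classic (is_real P \/ c' <> bot)) as [Hreal|Hend].
    { exact (split_below n HP H Hc' Hreal). }
    assert (E : P = left_end /\ c' = bot).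
    { destruct HP as [->|]; split; auto; apply NNPP; tauto. }
    destruct E as [-> ->]. destruct HQ as [->|HQ]; [|exact (split_bot_right n HQ H Hc')].
    rewrite (top_diff_uniq H top_diff_ends) in H.
    destruct (@split_below left_end right_end top (mid t0) 0) as [r Hr].
    { left. reflexivity. }
    { exact H. }
    { exact I. }
    { right. discriminate. }
    exists r. apply (good_split_weaken (w := at_label (mid t0) 0)); auto.
    left. apply at_label_lt_label. exact I.
  - exists (graft P c (P c + Z.of_nat (2 ^ j))).
    apply (good_split_weaken (lt_at_label_S Hv)). apply split_halve; auto.
Qed.

Definition left_endpoint (F : Zom_car T m -> Prop) (P : point) : Prop :=
  P = left_end \/ exists x, F x /\ P = point_of x.

Definition right_endpoint (F : Zom_car T m -> Prop) (Q : point) : Prop :=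
  Q = right_end \/ exists x, F x /\ Q = point_of x.

Definition no_point_between (F : Zom_car T m -> Prop) (P Q : point) : Prop :=
  forall x, F x -> ~ (point_lt P (point_of x) /\ point_lt (point_of x) Q).

Lemma left_endpoint_lower_end F P : left_endpoint F P -> lower_end P.
Proof. intros [->|[x [_ ->]]]; [left|right; apply is_real_point_of]; auto. Qed.

Lemma right_endpoint_upper_end F Q : right_endpoint F Q -> upper_end Q.
Proof. intros [->|[x [_ ->]]]; [left|right; apply is_real_point_of]; auto. Qed.

Lemma left_endpoint_mono (F C : Zom_car T m -> Prop) P :
  (forall x, F x -> C x) -> left_endpoint F P -> left_endpoint C P.
Proof. intros HFC [->|[x [Fx ->]]]; [left|right; exists x]; auto. Qed.

Lemma right_endpoint_mono (F C : Zom_car T m -> Prop) Q :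
  (forall x, F x -> C x) -> right_endpoint F Q -> right_endpoint C Q.
Proof. intros HFC [->|[x [Fx ->]]]; [left|right; exists x]; auto. Qed.

Lemma left_endpoint_total F P x :
  left_endpoint F P -> point_lt P (point_of x) \/ point_le (point_of x) P.
Proof.
  intros [->|[p [_ ->]]]; [left; apply left_end_lt_real, is_real_point_of|].
  destruct (lin_total Zom_lin p x) as [H|[->|H]]; [left|right; left|right; right];
    auto; apply Zom_lt_point_lt; auto.
Qed.

Lemma right_endpoint_total F Q x :
  right_endpoint F Q -> point_lt (point_of x) Q \/ point_le Q (point_of x).
Proof.
  intros [->|[q [_ ->]]]; [left; eexists; apply top_diff_real_right_end, is_real_point_of|].
  destruct (lin_total Zom_lin x q) as [H|[->|H]]; [left|right; left|right; right];
    auto; apply Zom_lt_point_lt; auto.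
Qed.

Lemma left_endpoint_le F P Q P' : left_endpoint F P -> no_point_between F P Q ->
  left_endpoint F P' -> point_lt P' Q -> point_le P' P.
Proof.
  intros HP Hgap [->|[z [Fz ->]]] HQ.
  - destruct HP as [->|[p [_ ->]]]; [left|right; apply left_end_lt_real, is_real_point_of]; auto.
  - destruct (left_endpoint_total z HP) as [H|H]; [destruct (Hgap z Fz)|]; auto.
Qed.

Lemma right_endpoint_ge F P Q Q' : right_endpoint F Q -> no_point_between F P Q ->
  right_endpoint F Q' -> point_lt P Q' -> point_le Q Q'.
Proof.
  intros HQ Hgap [->|[z [Fz ->]]] HP.
  - destruct HQ as [->|[q [_ ->]]]; [left|right; eexists; apply top_diff_real_right_end,
      is_real_point_of]; auto.
  - destruct (right_endpoint_total z HQ) as [H|H]; [destruct (Hgap z Fz)|]; auto.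
Qed.

Definition gaps_ge (w : tgt_car T) (F : Zom_car T m -> Prop) : Prop :=
  forall P Q c, left_endpoint F P -> right_endpoint F Q -> top_diff P Q c ->
    tgt_le w (gap_rank P Q c).

Lemma gaps_ge_insert F P Q x v w : gaps_ge w F -> tgt_lt ltT v w ->
  left_endpoint F P -> right_endpoint F Q -> no_point_between F P Q ->
  good_split v P Q (point_of x) -> gaps_ge v (fun z => F z \/ z = x).
Proof.
  intros Hw Hvw HP HQ Hgap [_ [c1 [c2 (T1 & T2 & V1 & V2)]]] P' Q' c' HP' HQ' Hc'.
  assert (EP : left_endpoint F P' \/ P' = point_of x).
  { destruct HP' as [->|[z [[Fz| ->] ->]]]; [left; left|left; right; exists z|right]; auto. }
  assert (EQ : right_endpoint F Q' \/ Q' = point_of x).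
  { destruct HQ' as [->|[z [[Fz| ->] ->]]]; [left; left|left; right; exists z|right]; auto. }
  assert (Px : point_lt P (point_of x)) by (exists c1; auto).
  assert (xQ : point_lt (point_of x) Q) by (exists c2; auto).
  destruct EP as [EP| ->], EQ as [EQ| ->].
  - left. exact (tgt_lt_le_trans Hvw (Hw _ _ _ EP EQ Hc')).
  - eapply tgt_le_trans; [exact V1|]. apply gap_rank_mono; [|left; auto|exact T1|exact Hc'].
    apply (left_endpoint_le HP Hgap EP). exact (point_lt_trans (ex_intro _ c' Hc') xQ).
  - eapply tgt_le_trans; [exact V2|]. apply gap_rank_mono; [left; auto| |exact T2|exact Hc'].
    apply (right_endpoint_ge HQ Hgap EQ). exact (point_lt_trans Px (ex_intro _ c' Hc')).
  - destruct Hc' as [X _]. lia.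
Qed.

Lemma cut_neighbours F (B : Type) (ltB : B -> B -> Prop) (j : {a | F a} -> B) (b : B) :
  is_strict_linorder ltB -> finite_type B -> order_embedding (sub_lt ZL F) ltB j ->
  exists P Q, left_endpoint F P /\ right_endpoint F Q /\ point_lt P Q /\
    (forall a, ltB (j a) b -> point_le (point_of (proj1_sig a)) P) /\
    (forall a, ltB b (j a) -> point_le Q (point_of (proj1_sig a))).
Proof.
  intros HB [lB HlB] [jinj jiff].
  assert (Hlt : forall a a', ltB (j a) (j a') ->
            point_lt (point_of (proj1_sig a)) (point_of (proj1_sig a'))).
  { intros a a' H. apply Zom_lt_point_lt, jiff, H. }
  assert (HP : exists P, (P = left_end \/ exists a, ltB (j a) b /\ P = point_of (proj1_sig a)) /\
             forall a, ltB (j a) b -> point_le (point_of (proj1_sig a)) P).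
  { destruct (max_image_below HB HlB j b) as [No|[a [Ha Hmax]]].
    - exists left_end. split; [left; auto|]. intros a Ha. destruct (No a Ha).
    - exists (point_of (proj1_sig a)). split; [eauto|].
      intros a' Ha'. destruct (Hmax a' Ha') as [E|E]; [left|right; auto].
      rewrite (jinj _ _ E). auto. }
  assert (HQ : exists Q, (Q = right_end \/ exists a, ltB b (j a) /\ Q = point_of (proj1_sig a)) /\
             forall a, ltB b (j a) -> point_le Q (point_of (proj1_sig a))).
  { destruct (max_image_below (lin_flip HB) HlB j b) as [No|[a [Ha Hmin]]].
    - exists right_end. split; [left; auto|]. intros a Ha. destruct (No a Ha).
    - exists (point_of (proj1_sig a)). split; [eauto|].
      intros a' Ha'. destruct (Hmin a' Ha') as [E|E]; [left|right; auto].
      rewrite (jinj _ _ E). auto. }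
  destruct HP as [P [EP HPmax]], HQ as [Q [EQ HQmin]].
  exists P, Q. split; [|split; [|split; auto]].
  - destruct EP as [->|[a [_ ->]]]; [left; auto|right].
    exists (proj1_sig a). split; [apply proj2_sig|auto].
  - destruct EQ as [->|[a [_ ->]]]; [left; auto|right].
    exists (proj1_sig a). split; [apply proj2_sig|auto].
  - destruct EP as [->|[a [Ha ->]]], EQ as [->|[a' [Ha' ->]]].
    + exists top. exact top_diff_ends.
    + apply left_end_lt_real, is_real_point_of.
    + exists top. apply top_diff_real_right_end, is_real_point_of.
    + apply Hlt. exact (lin_trans HB Ha Ha').
Qed.

Lemma rank_ge_of_gaps_ge w F : gaps_ge w F -> rk_ge ZL (tgt_lt ltT) w F.
Proof.
  revert F. induction w as [w IH] using (well_founded_ind tgt_wf). intros F Hw.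
  constructor.
  - intros v [Hvw _] B ltB j (HB & HBfin & Hj & b & Hb & Hcov).
    destruct (cut_neighbours b HB HBfin Hj)
      as (P & Q & HP & HQ & [c Hc] & Hbelow & Habove).
    assert (Hgap : no_point_between F P Q).
    { intros z Fz [H1 H2]. set (a := exist F z Fz).
      destruct (lin_total HB (j a) b) as [L|[E|L]]; [|exact (Hb a E)|].
      - exact (point_lt_irrefl (point_le_lt_trans (Hbelow a L) H1)).
      - exact (point_lt_irrefl (point_lt_le_trans H2 (Habove a L))). }
    destruct (gap_split (left_endpoint_lower_end HP) (right_endpoint_upper_end HQ) Hc
                (tgt_lt_le_trans Hvw (Hw _ _ _ HP HQ Hc))) as [r Hr].
    pose proof Hr as [Hreal [c1 [c2 [T1 [T2 _]]]]].
    destruct (point_of_surj Hreal) as [x <-].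
    destruct (@realization_of_cut _ _ Zom_lin F B ltB j b x HB Hj Hb Hcov) as [h Hh].
    + intros a Ha. apply Zom_lt_point_lt.
      exact (point_le_lt_trans (Hbelow a Ha) (ex_intro _ c1 T1)).
    + intros a Ha. apply Zom_lt_point_lt.
      exact (point_lt_le_trans (ex_intro _ c2 T2) (Habove a Ha)).
    + exists (fun z => F z \/ z = x), h. split; [exact Hh|].
      exact (IH v Hvw _ (gaps_ge_insert Hw Hvw HP HQ Hgap Hr)).
  - intros _ v Hv. apply IH; [exact Hv|].
    intros P Q c HP HQ Hc. left. exact (tgt_lt_le_trans Hv (Hw _ _ _ HP HQ Hc)).
Qed.

Definition small_gap (w : tgt_car T) (F : Zom_car T m -> Prop) : Prop :=
  exists P Q c, left_endpoint F P /\ right_endpoint F Q /\ top_diff P Q c /\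
    no_point_between F P Q /\ tgt_lt ltT (gap_rank P Q c) w.

Lemma small_gap_weaken w v F : tgt_le w v -> small_gap w F -> small_gap v F.
Proof.
  intros Hwv (P & Q & c & HP & HQ & Hc & Hgap & Hlt).
  exists P, Q, c. repeat (split; [assumption|]). exact (tgt_lt_le_trans Hlt Hwv).
Qed.

Lemma small_gap_insert F (C : Zom_car T m -> Prop) P Q c r :
  left_endpoint F P -> right_endpoint F Q -> top_diff P Q c -> no_point_between F P Q ->
  (forall z, F z -> C z) -> (forall z, C z -> z = r \/ F z) -> C r ->
  point_lt P (point_of r) -> point_lt (point_of r) Q -> small_gap (gap_rank P Q c) C.
Proof.
  intros HP HQ Hc Hgap HFC HCF Cr Pr rQ.
  assert (G1 : no_point_between C P (point_of r)).
  { intros z Cz [H1 H2]. destruct (HCF z Cz) as [->|Fz]; [exact (point_lt_irrefl H2)|].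
    apply (Hgap z Fz). split; [auto|exact (point_lt_trans H2 rQ)]. }
  assert (G2 : no_point_between C (point_of r) Q).
  { intros z Cz [H1 H2]. destruct (HCF z Cz) as [->|Fz]; [exact (point_lt_irrefl H1)|].
    apply (Hgap z Fz). split; [exact (point_lt_trans Pr H1)|auto]. }
  destruct Pr as [c1 T1], rQ as [c2 T2].
  destruct (gap_rank_split Hc T1 T2) as [L|L].
  - exists P, (point_of r), c1.
    split; [exact (left_endpoint_mono HFC HP)|split; [right; exists r; auto|]].
    split; [exact T1|split; [exact G1|exact L]].
  - exists (point_of r), Q, c2.
    split; [right; exists r; auto|split; [exact (right_endpoint_mono HFC HQ)|]].
    split; [exact T2|split; [exact G2|exact L]].
Qed.

Lemma not_rank_ge_of_small_gap w F :
  finite_set F -> small_gap w F -> ~ rk_ge ZL (tgt_lt ltT) w F.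
Proof.
  revert F. induction w as [w IH] using (well_founded_ind tgt_wf).
  intros F Hfin (P & Q & c & HP & HQ & Hc & Hgap & Hsmall) Hrk.
  destruct Hrk as [w F Hsucc Hlim].
  destruct (classic (exists v, immediate_pred (tgt_lt ltT) v w)) as [[v Hv]|Nv].
  - assert (Hle : tgt_le (gap_rank P Q c) v).
    { apply tgt_not_lt. intros X. apply (proj2 Hv). eauto. }
    set (lo := fun a => point_lt (point_of a) Q).
    assert (Hdown : forall a a', ZL a a' -> lo a' -> lo a).
    { intros a a' H. apply point_lt_trans, Zom_lt_point_lt, H. }
    pose proof (cut_extension Zom_lin Hfin Hdown) as Hpe.
    destruct (Hsucc v Hv _ _ _ Hpe) as (C & h & Hh & HrkC).
    destruct (cut_realization Hh) as (Hlo & Hhi & HCF).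
    pose proof Hh as (HFC & _ & Cr & _).
    assert (Pr : point_lt P (point_of (h None))).
    { destruct HP as [->|[p [Fp ->]]]; [apply left_end_lt_real, is_real_point_of|].
      apply Zom_lt_point_lt, Hlo; auto. exists c. exact Hc. }
    assert (rQ : point_lt (point_of (h None)) Q).
    { destruct HQ as [->|[q [Fq ->]]].
      { exists top. apply top_diff_real_right_end, is_real_point_of. }
      apply Zom_lt_point_lt, Hhi; auto. exact (@point_lt_irrefl _). }
    assert (Cfin : finite_set C).
    { destruct Hpe as (_ & HBfin & _). exact (realization_finite HBfin Hh). }
    apply (IH v (proj1 Hv) C Cfin); [|exact HrkC].
    exact (small_gap_weaken Hle (small_gap_insert HP HQ Hc Hgap HFC HCF (Cr None) Pr rQ)).
  - assert (Hlimit : is_limit (tgt_lt ltT) w) by (split; eauto).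
    destruct (classic (exists u, tgt_lt ltT (gap_rank P Q c) u /\ tgt_lt ltT u w))
      as [[u [U1 U2]]|No].
    + apply (IH u U2 F Hfin); [|exact (Hlim Hlimit u U2)].
      exists P, Q, c. auto.
    + apply Nv. exists (gap_rank P Q c). split; auto.
Qed.

End Rank.

Lemma exists_minimal (T : Type) (ltT : T -> T -> Prop) :
  well_founded ltT -> T -> exists t0, forall t, ~ ltT t t0.
Proof.
  intros Hwf t. induction t as [t IH] using (well_founded_ind Hwf).
  destruct (classic (exists s, ltT s t)) as [[s Hs]|No]; [exact (IH s Hs)|].
  exists t. intros s Hs. apply No. eauto.
Qed.

Theorem theorem6p19 (T : Type) (ltT : T -> T -> Prop)
  (Hlin : is_strict_linorder ltT) (Hwf : well_founded ltT)
  (Hcount : exists e : T -> nat, forall x y, e x = e y -> x = y)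
  (Hne : inhabited T)
  (m : nat) (Hm : 1 <= m) :
  rank_is (@Zom_lt T ltT m) (tgt_lt ltT) (inr (Nat.log2 m))
    (fun _ : Zom_car T m => False).
Proof.
  destruct Hne as [t]. destruct (exists_minimal Hwf t) as [t0 Ht0].
  split.
  - apply (rank_ge_of_gaps_ge Hlin Hwf Hm Ht0).
    intros P Q c [->|[x [[] _]]] [->|[y [[] _]]] Hc.
    rewrite (top_diff_uniq Hlin Hc (top_diff_ends ltT t0 Hm)), gap_rank_ends.
    right. reflexivity.
  - intros w Hw. apply (not_rank_ge_of_small_gap Hlin Hwf (t0 := t0) Hm).
    + exists []. intros x. split; intros [].
    + exists (left_end t0), (right_end (T:=T) m), (top T).
      split; [left|split; [left|split; [exact (top_diff_ends ltT t0 Hm)|split]]]; auto.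
      * intros x [].
      * rewrite gap_rank_ends. exact Hw.
Qed.
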